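(* Let $C$ be a $4$-dimensional simple coalgebra over an algebraically closed field $\Bbbk$ of characteristic zero and $T:C\to C$ a coalgebra automorphism of finite order. If $\operatorname{Tr}(T)=0$, then $\operatorname{ord}(T)=2$. *)

(* Tensors in K^n (x) K^n are represented as n x n matrices: the (j,k) entry is
   the coefficient of e_j (x) e_k, so x (x) y = x^T *m y. *)
From HB Require Import structures.
From mathcomp Require Import all_boot all_order all_algebra.
Set Implicit Arguments. Unset Strict Implicit. Unset Printing Implicit Defensive.
Import Order.TTheory GRing.Theory Num.Theory.
Local Open Scope ring_scope.

(* Structure data: Delta(e_i) = sum_{j,k} (cm i) j k  e_j (x) e_k ,
   epsilon(e_i) = cu 0 i. *)
Record coalg_data (K : fieldType) (n : nat) := CoalgData {
  cm : 'I_n -> 'M[K]_n;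
  cu : 'rV[K]_n
}.

Section Coalg.
Variables (K : fieldType) (n : nat) (C : coalg_data K n).

Definition comul (v : 'rV[K]_n) : 'M[K]_n := \sum_(i < n) v 0 i *: cm C i.
Definition counit (v : 'rV[K]_n) : K := \sum_(i < n) v 0 i * cu C 0 i.

(* coassociativity (Delta (x) id) Delta = (id (x) Delta) Delta and the
   two counit laws, written on basis vectors *)
Definition is_coalgebra : Prop :=
  [/\ (forall i l m p : 'I_n,
         \sum_(a < n) cm C i a p * cm C a l m = \sum_(b < n) cm C i l b * cm C b m p),
      (forall i b : 'I_n, \sum_(a < n) cu C 0 a * cm C i a b = (i == b)%:R)
    & (forall i a : 'I_n, \sum_(b < n) cm C i a b * cu C 0 b = (i == a)%:R)].

Definition in_tensor_square (V : {vspace 'rV[K]_n}) (X : 'M[K]_n) : Prop :=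
  exists m (x y : 'I_m -> 'rV[K]_n),
    (forall i, x i \in V /\ y i \in V) /\ X = \sum_(i < m) (x i)^T *m y i.

Definition subcoalgebra (V : {vspace 'rV[K]_n}) : Prop :=
  forall v, v \in V -> in_tensor_square V (comul v).

Definition simple_coalgebra : Prop :=
  (0 < n)%N /\ forall V, subcoalgebra V -> V = 0%VS \/ V = fullv.

(* a linear map T : C -> C acting on row vectors, v |-> v *m T.
   T (x) T acts on tensors by X |-> T^T *m X *m T. *)
Definition coalgebra_map (T : 'M[K]_n) : Prop :=
  (forall v, comul (v *m T) = T^T *m comul v *m T) /\
  (forall v, counit (v *m T) = counit v).

Definition coalgebra_automorphism (T : 'M[K]_n) : Prop :=
  coalgebra_map T /\ T \in unitmx.
End Coalg.

Definition has_finite_order (K : fieldType) (n : nat) (T : 'M[K]_n.+1) : Prop :=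
  exists m, (0 < m)%N /\ T ^+ m = 1.

Definition has_order (K : fieldType) (n : nat) (T : 'M[K]_n.+1) (k : nat) : Prop :=
  [/\ (0 < k)%N, T ^+ k = 1 & forall j, (0 < j < k)%N -> T ^+ j != 1].

(* Identify the dual algebra A = C^* with the coordinate space; its product
   is dual to the comultiplication and its unit is the counit.  Annihilators of
   two-sided ideals of A are subcoalgebras of C, so A has no nontrivial
   two-sided ideals.  Over an algebraically closed field A has zero divisors,
   hence a proper nonzero left ideal L.  L cannot have codimension 1 (otherwise
   (L : w) = {a | a w in L} is a proper nonzero two-sided ideal for w not in
   L), and A acts faithfully on L, so 4 <= (dim L)^2 forces dim L = 2 and
   A ~ M_2(K).  The transpose of T is an algebra automorphism of A, hence by
   Skolem-Noether conjugation X |-> g X g^-1 in M_2(K), whose trace is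
   tr g * tr g^-1.  So g or g^-1 is traceless, its square is scalar by
   Cayley-Hamilton, and T^2 = 1; finally T <> 1 because tr 1 = 4 <> 0 in
   characteristic 0. *)

From HB Require Import structures.
From mathcomp Require Import all_boot all_order all_algebra.
From mathcomp Require Import zify.
Set Implicit Arguments. Unset Strict Implicit. Unset Printing Implicit Defensive.
Import Order.TTheory GRing.Theory Num.Theory.
Local Open Scope ring_scope.

Lemma mul_delta_mx_mx (K : fieldType) m (M : 'M[K]_m) (i a b j : 'I_m) :
  delta_mx i a *m M *m delta_mx b j = M a b *: delta_mx i j.
Proof.
rewrite -(mul_delta_mx (0 : 'I_1) i a) -(mul_delta_mx (0 : 'I_1) b j).
have aMb : delta_mx 0 a *m M *m delta_mx b 0 = (M a b)%:M :> 'M_1.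
  by rewrite -rowE -colE [LHS]mx11_scalar !mxE.
by rewrite !mulmxA -(mulmxA _ (delta_mx 0 a)) -(mulmxA _ (delta_mx 0 a *m M)) aMb
  mul_mx_scalar -scalemxAl mul_delta_mx.
Qed.

Section SkolemNoether.
Variables (K : fieldType) (m : nat) (phi : {linear 'M[K]_m.+1 -> 'M[K]_m.+1}).
Hypotheses (phi_inj : injective phi) (phiM : {morph phi : X Y / X *m Y}).

Local Notation E := (@delta_mx K m.+1 m.+1).
Local Notation f i j := (phi (E i j)).

Lemma phi_delta_mul i j k l : f i j *m f k l = f i l *+ (j == k).
Proof. by rewrite -phiM mul_delta_mx_cond raddfMn. Qed.

Theorem skolem_noether :
  exists g h : 'M[K]_m.+1, g *m h = 1%:M /\ forall X, phi X = g *m X *m h.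
Proof.
have /existsP [a /existsP [b fab]] : [exists a, exists b, f 0 0 a b != 0].
  have : f 0 0 != 0.
    rewrite -(linear0 phi) (inj_eq phi_inj); apply/eqP => /matrixP/(_ 0 0).
    by rewrite !mxE eqxx => /eqP; rewrite oner_eq0.
  apply: contraR => /existsPn nab; apply/eqP/matrixP => a b; rewrite mxE.
  by have /existsPn/(_ b)/negPn/eqP := nab a.
pose g := \sum_i f i 0 *m E b i.
pose h := \sum_i E i a *m f 0 i.
have gE j k : g *m E j k = f j k *m g.
  transitivity (f j 0 *m E b k).
    rewrite mulmx_suml (bigD1 j) //= big1 => [|i /negbTE ij].
      by rewrite -mulmxA mul_delta_mx addr0.
    by rewrite -mulmxA mul_delta_mx_cond ij mulr0n mulmx0.
  rewrite mulmx_sumr (bigD1 k) //= big1 => [|i /negbTE ik].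
    by rewrite mulmxA phi_delta_mul eqxx mulr1n addr0.
  by rewrite mulmxA phi_delta_mul eq_sym ik mulr0n mul0mx.
have hg : h *m g = (f 0 0 a b)%:M.
  rewrite mulmx_suml scalar_mx_sum_delta; apply: eq_bigr => i _.
  rewrite mulmx_sumr (bigD1 i) //= big1 => [|j /negbTE ij].
    rewrite !mulmxA -(mulmxA _ (f 0 i)) phi_delta_mul eqxx mulr1n.
    by rewrite mul_delta_mx_mx addr0.
  rewrite !mulmxA -(mulmxA _ (f 0 i)) phi_delta_mul eq_sym ij mulr0n.
  by rewrite mulmx0 mul0mx.
clearbody g h; have gh : g *m ((f 0 0 a b)^-1 *: h) = 1%:M.
  by apply: mulmx1C; rewrite -scalemxAl hg scale_scalar_mx mulVf.
exists g, ((f 0 0 a b)^-1 *: h); split => // X.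
have gX : g *m X = phi X *m g.
  rewrite [X]matrix_sum_delta !linear_sum mulmx_suml /=; apply: eq_bigr => i _.
  rewrite !linear_sum mulmx_suml /=; apply: eq_bigr => j _.
  by rewrite !linearZ /= -scalemxAl gE.
by rewrite gX -mulmxA gh mulmx1.
Qed.

End SkolemNoether.

Lemma mxtrace_lrmul (K : fieldType) m (S : 'M[K]_(m * m)) (g h : 'M[K]_m) :
  (forall X, mxvec (g *m X *m h) = mxvec X *m S) -> \tr S = \tr g * \tr h.
Proof.
move=> gXh.
have Sii i j : S (mxvec_index i j) (mxvec_index i j) = g i i * h j j.
  transitivity ((mxvec (delta_mx i j) *m S) 0 (mxvec_index i j)).
    by rewrite mxvec_delta -rowE [RHS]mxE.
  rewrite -gXh mxvecE.
  rewrite -(@mul_delta_mx K m 1 m 0 i j) mulmxA -colE -mulmxA -rowE.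
  by rewrite mxE big_ord1 [col _ _ _ _]mxE [row _ _ _ _]mxE.
rewrite /mxtrace (reindex (uncurry (@mxvec_index m m))) /=; last first.
  have [f f1 f2] := curry_mxvec_bij m m.
  by exists f => x _; [apply: f1 | apply: f2].
rewrite mulr_suml; under [RHS]eq_bigr do rewrite mulr_sumr.
by rewrite pair_bigA; apply: eq_bigr => -[i j] _; exact: Sii.
Qed.

Lemma mx2_sqr_tr0 (K : fieldType) (g : 'M[K]_2) :
  \tr g = 0 -> g *m g = (- \det g)%:M.
Proof.
move=> tr0; have := Cayley_Hamilton g.
rewrite -[char_poly g]coefK poly_def size_char_poly !big_ord_recr big_ord0 /= add0r.
have c2 : (char_poly g)`_2 = 1.
  by rewrite -(monicP (char_poly_monic g)) lead_coefE size_char_poly.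
rewrite char_poly_det (char_poly_trace g isT) tr0 c2 oppr0 scale0r addr0 scale1r.
rewrite rmorphD /= horner_mxZ !rmorphXn /= horner_mx_X expr0 sqrrN expr1n mul1r.
move/eqP; rewrite addrC addr_eq0 => /eqP; rewrite expr2 mulmxE => ->.
by rewrite -scalemx1 scaleNr.
Qed.

Lemma mx2_conj_involutive (K : fieldType) (g h X : 'M[K]_2) :
  g *m h = 1%:M -> \tr g * \tr h = 0 -> g *m (g *m X *m h) *m h = X.
Proof.
move=> gh /eqP; rewrite mulf_eq0.
have -> : g *m (g *m X *m h) *m h = g *m g *m X *m (h *m h) by rewrite !mulmxA.
have gghh : g *m g *m (h *m h) = 1%:M.
  by rewrite -mulmxA (mulmxA g h h) gh mul1mx gh.
case/orP => /eqP/mx2_sqr_tr0 sq; rewrite sq in gghh *.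
  by rewrite -scalar_mxC -mulmxA gghh mulmx1.
by rewrite -mulmxA scalar_mxC mulmxA gghh mul1mx.
Qed.

Section DualAlgebra.
Variables (K : fieldType) (n : nat) (C : coalg_data K n).

(* Row vectors also stand for functionals on C, in the dual basis: [dmul] is
   the convolution product of C^*, with unit [cu C]. *)
Definition dmul (f g : 'rV[K]_n) : 'rV[K]_n := \row_i (f *m cm C i *m g^T) 0 0.
Definition rmul_mx (g : 'rV[K]_n) : 'M[K]_n := \matrix_(j, i) (cm C i *m g^T) j 0.
Definition lmul_mx (f : 'rV[K]_n) : 'M[K]_n := \matrix_(k, i) (f *m cm C i) 0 k.

Lemma dmul_rmul f g : dmul f g = f *m rmul_mx g.
Proof.
apply/rowP => i; rewrite mxE -mulmxA !mxE.
by apply: eq_bigr => j _; rewrite !mxE.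
Qed.

Lemma dmul_lmul f g : dmul f g = g *m lmul_mx f.
Proof. by apply/rowP => i; rewrite !mxE; apply: eq_bigr => k _; rewrite !mxE mulrC. Qed.

Fact lmul_mx_is_linear : linear lmul_mx.
Proof.
move=> c f g; apply/matrixP => k i; rewrite !mxE mulr_sumr -big_split.
by apply: eq_bigr => j _; rewrite !mxE mulrDl mulrA.
Qed.
HB.instance Definition _ := GRing.isLinear.Build K 'rV[K]_n 'M[K]_n _ lmul_mx
  lmul_mx_is_linear.

Lemma comul_delta i : comul C (delta_mx 0 i) = cm C i.
Proof.
rewrite /comul (bigD1 i) //= mxE !eqxx scale1r big1 ?addr0 // => j /negbTE ji.
by rewrite mxE ji andbF scale0r.
Qed.

Lemma comul_pairing f g v : f *m comul C v *m g^T = dmul f g *m v^T.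
Proof.
apply/rowP => j; rewrite ord1 /comul mulmx_sumr mulmx_suml summxE [RHS]mxE.
by apply: eq_bigr => i _; rewrite -scalemxAr -scalemxAl !mxE mulrC.
Qed.

Hypothesis hC : is_coalgebra C.

Lemma comul_coassoc h i :
  comul C (h *m (cm C i)^T) = cm C i *m (rmul_mx h)^T.
Proof.
case: hC => coassoc _ _; apply/matrixP => l m.
rewrite /comul summxE !mxE.
transitivity (\sum_p h 0 p * \sum_a cm C i a p * cm C a l m).
  under eq_bigr do rewrite !mxE mulr_suml.
  rewrite exchange_big; apply: eq_bigr => p _; rewrite mulr_sumr.
  by apply: eq_bigr => a _; rewrite !mxE mulrA.
transitivity (\sum_p \sum_b h 0 p * (cm C i l b * cm C b m p)).
  by apply: eq_bigr => p _; rewrite coassoc mulr_sumr.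
rewrite exchange_big; apply: eq_bigr => b _; rewrite !mxE mulr_sumr.
by apply: eq_bigr => p _; rewrite !mxE mulrCA [h 0 p * _]mulrC.
Qed.

Lemma dmulA f g h : dmul (dmul f g) h = dmul f (dmul g h).
Proof.
apply/rowP => i; rewrite [LHS]mxE [RHS]mxE -mulmxA.
rewrite -[cm C i *m h^T]trmxK trmx_mul trmxK.
by rewrite -comul_pairing comul_coassoc dmul_rmul trmx_mul !mulmxA.
Qed.

Lemma dmul1l g : dmul (cu C) g = g.
Proof.
case: hC => _ counitl _; apply/rowP => i; rewrite !mxE.
under eq_bigr do rewrite !mxE counitl.
rewrite (bigD1 i) //= eqxx mul1r big1 ?addr0 // => k /negbTE ki.
by rewrite eq_sym ki mul0r.
Qed.

Lemma lmul_mx_dmul a b : lmul_mx (dmul a b) = lmul_mx b *m lmul_mx a.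
Proof.
apply/row_matrixP => i; rewrite !rowE -dmul_lmul dmulA dmul_lmul.
by rewrite [dmul b _]dmul_lmul mulmxA.
Qed.

Lemma lmul_mx1 : lmul_mx (cu C) = 1%:M.
Proof. by apply/row_matrixP => i; rewrite !rowE -dmul_lmul dmul1l mulmx1. Qed.

End DualAlgebra.

Lemma dmul_coalgebra_map (K : fieldType) n (C : coalg_data K n) (T : 'M[K]_n) :
  coalgebra_map C T -> forall f g, dmul C (f *m T^T) (g *m T^T) = dmul C f g *m T^T.
Proof.
move=> [hT _] f g; apply/rowP => i; rewrite [LHS]mxE.
have -> : f *m T^T *m cm C i *m (g *m T^T)^T =
          f *m comul C (delta_mx 0 i *m T) *m g^T.
  by rewrite hT comul_delta trmx_mul trmxK !mulmxA.
by rewrite comul_pairing trmx_mul trmx_delta mulmxA -colE mxE.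
Qed.

Section TensorSquare.
Variables (K : fieldType) (n : nat).

Lemma mem_span_rows m (N : 'M[K]_(m, n)) v :
  (v \in span [tuple row i N | i < m]) = (v <= N)%MS.
Proof.
apply/idP/idP => [/coord_span -> | /submxP [w ->]].
  apply: summx_sub => i _; apply: scalemx_sub.
  by rewrite nth_mktuple row_sub.
rewrite mulmx_sum_row; apply: memv_suml => i _; apply: memvZ.
by apply: memv_span; apply/mapP; exists i; rewrite ?mem_enum.
Qed.

Lemma trmx_mul_sum_row m p (A : 'M[K]_(m, n)) (B : 'M[K]_(m, p)) :
  A^T *m B = \sum_i (row i A)^T *m row i B.
Proof.
apply/matrixP => j k; rewrite mxE summxE; apply: eq_bigr => i _.
by rewrite [RHS]mxE big_ord1 !mxE.
Qed.

Lemma tensor_square_span_rows m (N : 'M[K]_(m, n)) (Y : 'M[K]_n) :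
  (Y <= N)%MS -> (Y^T <= N)%MS ->
  in_tensor_square (span [tuple row i N | i < m]) Y.
Proof.
move=> YN YtN; set P := pinvmx N.
have YPN : Y *m P *m N = Y := mulmxKpV YN.
have NPY : N^T *m P^T *m Y = Y.
  rewrite -[Y in RHS]trmxK -(mulmxKpV YtN).
  by rewrite (trmx_mul (Y^T *m P)) (trmx_mul Y^T) trmxK mulmxA.
exists m, (fun i => row i N), (fun i => row i (P^T *m Y)); split.
  move=> i; rewrite !mem_span_rows row_sub -YPN (mulmxA P^T (Y *m P)).
  by rewrite row_mul submxMl.
by rewrite -trmx_mul_sum_row (mulmxA N^T P^T Y) NPY.
Qed.

End TensorSquare.

Section Ideals.
Variables (K : fieldType) (n : nat) (C : coalg_data K n).

Definition left_ideal m (M : 'M[K]_(m, n)) :=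
  forall a f, (f <= M)%MS -> (dmul C a f <= M)%MS.
Definition right_ideal m (M : 'M[K]_(m, n)) :=
  forall a f, (f <= M)%MS -> (dmul C f a <= M)%MS.

Hypothesis hC : is_coalgebra C.

Definition colon_mx m (L : 'M[K]_(m, n)) w := kermx (rmul_mx C w *m cokermx L).

Lemma sub_colon_mx m (L : 'M[K]_(m, n)) w a :
  (a <= colon_mx L w)%MS = (dmul C a w <= L)%MS.
Proof. by rewrite sub_kermx submxE dmul_rmul mulmxA. Qed.

Lemma left_ideal_colon_mx m (L : 'M[K]_(m, n)) w :
  left_ideal L -> left_ideal (colon_mx L w).
Proof. by move=> hL b f; rewrite !sub_colon_mx dmulA //; apply: hL. Qed.



Lemma comul_orthogonal_ideal m (M : 'M[K]_(m, n)) v :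
  left_ideal M -> right_ideal M -> v *m M^T = 0 ->
  comul C v *m M^T = 0 /\ M *m comul C v = 0.
Proof.
move=> hl hr vM.
have Mv : M *m v^T = 0 by rewrite -[LHS]trmxK trmx_mul trmxK vM trmx0.
have orth f g : (dmul C f g <= M)%MS -> f *m comul C v *m g^T = 0.
  by case/submxP=> w fgM; rewrite comul_pairing fgM -mulmxA Mv mulmx0.
split.
  apply/matrixP => j k; rewrite [RHS]mxE.
  transitivity (((delta_mx 0 j : 'rV_n) *m comul C v *m (row k M)^T) 0 0).
    by rewrite -rowE !mxE; apply: eq_bigr => l _; rewrite !mxE.
  by rewrite orth ?hl ?row_sub // mxE.
apply/row_matrixP => k; rewrite row_mul row0; apply/rowP => j; rewrite [RHS]mxE.
transitivity ((row k M *m comul C v *m (delta_mx 0 j : 'rV_n)^T) 0 0).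
  by rewrite trmx_delta -colE [RHS]mxE.
by rewrite (orth (row k M) (delta_mx 0 j)) ?hr ?row_sub // mxE.
Qed.

Lemma simple_ideal_trivial m (M : 'M[K]_(m, n)) : simple_coalgebra C ->
  left_ideal M -> right_ideal M -> M = 0 \/ row_full M.
Proof.
move=> [_ hs] hl hr; set N := kermx M^T.
have sub : subcoalgebra C (span [tuple row i N | i < n]).
  move=> v; rewrite mem_span_rows => /sub_kermxP vN.
  have [YM MY] := comul_orthogonal_ideal hl hr vN.
  apply: tensor_square_span_rows; apply/sub_kermxP => //.
  by rewrite -trmx_mul MY trmx0.
case: (hs _ sub) => hV; [right | left].
  rewrite /row_full -mxrank_tr -[_ == n]/(row_free M^T) -kermx_eq0.
  apply/eqP/row_matrixP => i; rewrite row0; apply/eqP.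
  by rewrite -memv0 -hV mem_span_rows row_sub.
have : (1%:M <= N)%MS.
  by apply/row_subP => i; rewrite -mem_span_rows hV memvf.
by move/sub_kermxP; rewrite mul1mx => /(congr1 trmx); rewrite trmxK trmx0.
Qed.

Lemma left_ideal_rank_neq_pred (L : 'M[K]_n) : simple_coalgebra C ->
  left_ideal L -> L != 0 -> \rank L <> n.-1.
Proof.
move=> hs hL L0 rL; have rL0 : (0 < \rank L)%N by rewrite lt0n mxrank_eq0.
have [w Lw] : exists w : 'rV[K]_n, ~~ (w <= L)%MS.
  have : ~~ row_full L by rewrite /row_full rL; lia.
  by rewrite -sub1mx => /row_subPn [i Li]; exists (row i 1%:M).
have Lw_full : row_full (L + w)%MS.
  have : (L < L + w)%MS.
    by rewrite ltmxE addsmxSl /=; exact: contraNN (submx_trans (addsmxSr L w)) Lw.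
  rewrite ltmxErank addsmxSl /row_full eqn_leq rank_leq_col rL /=.
  by move: (rank_leq_col (L + w)%MS); lia.
set J := colon_mx L w.
have hJr : right_ideal J.
  move=> b f; rewrite !sub_colon_mx dmulA // => fwL.
  have /sub_addsmxP [[u c] /= ->] : (dmul C b w <= L + w)%MS by rewrite submx_full.
  rewrite dmul_lmul mulmxDl addmx_sub //.
    by rewrite -dmul_lmul hL ?submxMl.
  by rewrite -mulmxA -dmul_lmul mulmx_sub.
have hJl : left_ideal J := left_ideal_colon_mx hL.
case: (simple_ideal_trivial hs hJl hJr) => [J0 | Jfull].
  have := mxrank_ker (rmul_mx C w *m cokermx L).
  rewrite -[kermx _]/(colon_mx L w) -/J J0 mxrank0.
  have := mxrankM_maxr (rmul_mx C w) (cokermx L); rewrite mxrank_coker.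
  by move: (rank_leq_col L); lia.
have : (cu C <= J)%MS by rewrite submx_full.
by rewrite sub_colon_mx dmul1l // (negbTE Lw).
Qed.

End Ideals.

Section ClosedField.
Variables (K : closedFieldType) (n : nat) (C : coalg_data K n).
Hypothesis hC : is_coalgebra C.

Lemma dmul_zero_divisor : (1 < n)%N ->
  exists z x, [/\ z != 0, x != 0 & dmul C z x = 0].
Proof.
move=> n1; have [a cua] : exists a : 'rV[K]_n, ~~ (a <= cu C)%MS.
  have : ~~ row_full (cu C).
    by rewrite /row_full neq_ltn (leq_ltn_trans (rank_leq_row _) n1).
  by rewrite -sub1mx => /row_subPn [i cui]; exists (row i 1%:M).
have [lam] : exists lam, root (char_poly (lmul_mx C a)) lam.
  by apply/closed_rootP; rewrite size_char_poly; case: n n1.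
rewrite -eigenvalue_root_char => /eigenvalueP [x ax x0].
exists (a - lam *: cu C), x; split => //.
  by rewrite subr_eq0; apply: contraNneq cua => ->; rewrite scalemx_sub.
by rewrite dmul_lmul linearB linearZ /= lmul_mx1 // mulmxBr ax -scalemxAr mulmx1 subrr.
Qed.

Lemma exists_proper_left_ideal : (1 < n)%N ->
  exists L : 'M[K]_n, [/\ left_ideal C L, L != 0 & ~~ row_full L].
Proof.
move=> /dmul_zero_divisor [z [x [z0 x0 zx]]]; exists (rmul_mx C z); split.
- by move=> b f /submxP [w ->]; rewrite -dmul_rmul -dmulA // dmul_rmul submxMl.
- by apply: contraNneq z0 => z_0; rewrite -(dmul1l hC z) dmul_rmul z_0 mulmx0.
apply: contraNN x0 => /(submx_full (cu C))/submxP [w cuw]; apply/eqP.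
by rewrite -(dmul1l hC x) cuw -dmul_rmul dmulA // zx dmul_lmul mul0mx.
Qed.

End ClosedField.

Section LeftRegularRepresentation.
Variables (K : fieldType) (n : nat) (C : coalg_data K n).
Hypothesis hC : is_coalgebra C.
Variables (r : nat) (B : 'M[K]_(r, n)).
Hypothesis (Bfree : row_free B) (Bideal : left_ideal C B).

Definition rho a : 'M[K]_r := B *m lmul_mx C a *m pinvmx B.

Lemma rhoB a : rho a *m B = B *m lmul_mx C a.
Proof.
apply: mulmxKpV; apply/row_subP => i.
by rewrite row_mul -dmul_lmul Bideal ?row_sub.
Qed.

Lemma rho_dmul a b : rho (dmul C a b) = rho b *m rho a.
Proof.
apply: (row_free_inj Bfree); rewrite /= rhoB lmul_mx_dmul // mulmxA -rhoB.
by rewrite -mulmxA -rhoB mulmxA.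
Qed.

Lemma rho1 : rho (cu C) = 1%:M.
Proof. by apply: (row_free_inj Bfree); rewrite /= rhoB lmul_mx1 // mulmx1 mul1mx. Qed.

Fact rho_is_linear : linear rho.
Proof.
by move=> c a b; rewrite /rho linearP mulmxDr mulmxDl -!scalemxAr -scalemxAl.
Qed.
HB.instance Definition _ := GRing.isLinear.Build K 'rV[K]_n 'M[K]_r _ rho
  rho_is_linear.

Definition rho_mx : 'M[K]_(n, r * r) := lin1_mx (mxvec \o rho).

Lemma rho_mxE a : mxvec (rho a) = a *m rho_mx.
Proof. by rewrite mul_rV_lin1. Qed.

Lemma rho_mx_free : simple_coalgebra C -> (0 < r)%N -> row_free rho_mx.
Proof.
move=> hs r0; rewrite -kermx_eq0.
have rho_eq0 a : (rho a == 0) = (a <= kermx rho_mx)%MS.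
  by rewrite sub_kermx -rho_mxE mxvec_eq0.
have hl : left_ideal C (kermx rho_mx).
  by move=> b f; rewrite -!rho_eq0 rho_dmul => /eqP ->; rewrite mul0mx.
have hr : right_ideal C (kermx rho_mx).
  by move=> b f; rewrite -!rho_eq0 rho_dmul => /eqP ->; rewrite mulmx0.
case: (simple_ideal_trivial hs hl hr) => [-> // | /(submx_full (cu C))].
rewrite -rho_eq0 rho1 => /eqP/matrixP/(_ (Ordinal r0) (Ordinal r0)).
by rewrite !mxE eqxx => /eqP; rewrite oner_eq0.
Qed.

End LeftRegularRepresentation.

Section TracelessAutomorphism.
Variables (K : fieldType) (C : coalg_data K 4) (T : 'M[K]_4).
Hypotheses (hC : is_coalgebra C) (hs : simple_coalgebra C).
Hypotheses (hT : coalgebra_automorphism C T) (htr : \tr T = 0).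

Lemma coalgebra_automorphism_sqr (B : 'M[K]_(2, 4)) :
  row_free B -> left_ideal C B -> T *m T = 1%:M.
Proof.
move=> Bfree Bideal; have [Tmap Tu] := hT.
set R := rho_mx C B; set S : 'M[K]_(2 * 2) := invmx R *m T^T *m R.
have Ru : R \in unitmx by rewrite -row_free_unit (rho_mx_free hC Bfree Bideal hs).
have TtRS : T^T = R *m S *m invmx R by rewrite /S !mulmxA mulmxV // mul1mx mulmxK.
pose phi := vec_mx \o mulmxr S \o mxvec.
have rhoT a : phi (rho C B a) = rho C B (a *m T^T).
  by rewrite /phi /= rho_mxE !mulmxA mulmxK // -rho_mxE mxvecK.
have rho_onto (X : 'M[K]_2) : X = rho C B (mxvec X *m invmx R).
  by apply: (can_inj mxvecK); rewrite rho_mxE // mulmxKV.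
have phiM : {morph phi : X Y / X *m Y}.
  move=> X Y; rewrite [X]rho_onto [Y]rho_onto -rho_dmul // rhoT.
  by rewrite -dmul_coalgebra_map // rho_dmul // !rhoT.
have phi_inj : injective phi.
  move=> X Y /(congr1 mxvec); rewrite /phi /= !vec_mxK => /(row_free_inj _).
  rewrite row_free_unit /S !unitmx_mul unitmx_inv unitmx_tr Ru Tu.
  by move=> /(_ isT)/(can_inj mxvecK).
have [g [h [gh phiE]]] := skolem_noether phi_inj phiM.
have gXh X : mxvec (g *m X *m h) = mxvec X *m S by rewrite -phiE /phi /= vec_mxK.
have trgh : \tr g * \tr h = 0.
  rewrite -(mxtrace_lrmul gXh) /S -mulmxA mxtrace_mulC -mulmxA mulmxV //.
  by rewrite mulmx1 mxtrace_tr.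
have SS : S *m S = 1%:M.
  apply/row_matrixP => k; rewrite row1 rowE -[delta_mx 0 k]vec_mxK mulmxA.
  by rewrite -!gXh mx2_conj_involutive.
clearbody S; apply: trmx_inj; rewrite trmx_mul trmx1 TtRS !mulmxA mulmxKV //.
by rewrite -(mulmxA R S S) SS mulmx1 mulmxV.
Qed.

End TracelessAutomorphism.

Lemma exists_rank2_left_ideal (K : closedFieldType) (C : coalg_data K 4) :
  is_coalgebra C -> simple_coalgebra C ->
  exists B : 'M[K]_(2, 4), row_free B /\ left_ideal C B.
Proof.
move=> hC hs; have [L [hL L0 Lnf]] := exists_proper_left_ideal hC (isT : (1 < 4)%N).
have Lb : left_ideal C (row_base L) by move=> a f; rewrite !eq_row_base; apply: hL.
have r0 : (0 < \rank L)%N by rewrite lt0n mxrank_eq0.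
have r4 : (\rank L < 4)%N by rewrite ltn_neqAle Lnf rank_leq_col.
have r3 : \rank L <> 3%N := left_ideal_rank_neq_pred hC hs hL L0.
have rr : (4 <= \rank L * \rank L)%N.
  have /eqP rk4 := rho_mx_free hC (row_base_free L) Lb hs r0.
  by rewrite -[X in (X <= _)%N]rk4 rank_leq_col.
have r2 : \rank L = 2%N by move: r0 r4 r3 rr; nia.
by move: (row_base L) (row_base_free L) Lb; rewrite r2 => B Bfree Bideal; exists B.
Qed.

Theorem lemma2p2 (K : closedFieldType) (hK : [pchar K] =i pred0)
  (C : coalg_data K 4) (hC : is_coalgebra C) (hs : simple_coalgebra C)
  (T : 'M[K]_4) (hT : coalgebra_automorphism C T) (hfin : has_finite_order T)
  (htr : \tr T = 0) :
  has_order T 2.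
Proof.
have [B [Bfree Bideal]] := exists_rank2_left_ideal hC hs.
have TT := coalgebra_automorphism_sqr hC hs hT htr Bfree Bideal.
split => [// | | j /andP [j0 j2]]; first by rewrite expr2 -mulmxE TT.
have -> : j = 1%N by lia.
rewrite expr1; apply/eqP => T1; move/eqP: htr; rewrite T1 mxtrace1.
by move/pcharf0P: hK => ->.
Qed.
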